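(* Let $G=(V,E)$ be a simple graph with at least two pendent vertices. Let $u\in V$ with $d_G(u)\ge 3$, let $T$ be a hanging tree of $G$ connected to $u$ (with $|V(T)|\ge 1$), and let $v$ be a pendent vertex of $G$ with $v\notin V(T)$. Let $G'$ be the graph obtained from $G$ by the branch-transformation from $u$ to $v$. Then $\mathrm{irr}_t(G) > \mathrm{irr}_t(G')$.
   Context: For a simple graph $G=(V,E)$ and $w\in V$, $d_G(w)$ denotes the degree of $w$. The total irregularity is $\mathrm{irr}_t(G)=\frac12\sum_{x,y\in V}|d_G(x)-d_G(y)|$, where the sum runs over all ordered pairs $(x,y)\in V\times V$. A pendent vertex is a vertex of degree $1$. An induced subtree $T$ of $G$ is a hanging tree of $G$ connected to a vertex $u\notin V(T)$ if $G$ is obtained from the disjoint union of $T$ and $G-V(T)$ by adding exactly one edge $wu$ with $w\in V(T)$ and $u\in V(G)\setminus V(T)$. Branch-transformation from $u$ to $v$: given $u$, $T$ and $v$ as in the claim, where $wu$ is the unique edge joining $T$ to $G-V(T)$, let $G'$ be the graph obtained from $G$ by deleting the edge $wu$ and adding the edge $wv$. That is, $T$ is detached from $u$ and attached to $v$. *)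

From HB Require Import structures.
From mathcomp Require Import all_boot all_order all_algebra.
Set Implicit Arguments. Unset Strict Implicit. Unset Printing Implicit Defensive.
Import Order.TTheory GRing.Theory Num.Theory.

Definition simple_graph (V : finType) (e : rel V) : Prop :=
  irreflexive e /\ symmetric e.

Definition deg (V : finType) (e : rel V) (x : V) : nat := #|[set y | e x y]|.

Definition irr_t (V : finType) (e : rel V) : rat :=
  (2%:R)^-1 * \sum_(x : V) \sum_(y : V) `|(deg e x)%:R - (deg e y)%:R : rat|.

Definition pendent (V : finType) (e : rel V) (x : V) : bool := deg e x == 1%N.

Definition induced (V : finType) (e : rel V) (T : {set V}) : rel V :=
  [rel x y | [&& e x y, x \in T & y \in T]].

Definition connected_on (V : finType) (e : rel V) (T : {set V}) : Prop :=
  forall x y, x \in T -> y \in T -> connect (induced e T) x y.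

Definition acyclic_on (V : finType) (e : rel V) (T : {set V}) : Prop :=
  forall c : seq V, (3 <= size c)%N -> uniq c -> {subset c <= T} ->
    ~~ cycle (induced e T) c.

Definition induced_tree (V : finType) (e : rel V) (T : {set V}) : Prop :=
  T != set0 /\ connected_on e T /\ acyclic_on e T.

Definition hanging_tree (V : finType) (e : rel V) (T : {set V}) (w u : V) : Prop :=
  [/\ induced_tree e T, w \in T, u \notin T, e w u &
      forall x y, x \in T -> y \notin T -> e x y -> x = w /\ y = u].

Definition branch_transform (V : finType) (e : rel V) (w u v : V) : rel V :=
  [rel x y | (e x y && ~~ (((x == w) && (y == u)) || ((x == u) && (y == w))))
             || ((x == w) && (y == v)) || ((x == v) && (y == w))].

(* Moving the pendant tree from u to v lowers d(u) by one, raises d(v) from 1 to 2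
   and leaves every other degree unchanged.  Since d(u) >= 3, for every third
   vertex x the two contributions |d(u) - d(x)| + |d(v) - d(x)| cannot increase
   (the two degrees move towards each other without crossing), while the
   contribution of the pair u, v itself drops by 2. *)
From HB Require Import structures.
From mathcomp Require Import all_boot all_order all_algebra lra.
Import Order.TTheory GRing.Theory Num.Theory.
Set Implicit Arguments.
Unset Strict Implicit.
Local Open Scope ring_scope.

Ltac split_abs x :=
  let h := fresh "h" in
  case: (lerP 0 x) => h; [rewrite (ger0_norm h) | rewrite (ltr0_norm h)].

Lemma dist_transfer_le (R : realDomainType) (a b k : R) : b + 2 <= a ->
  `|a - 1 - k| + `|b + 1 - k| <= `|a - k| + `|b - k|.
Proof.
move=> ab.
split_abs (a - 1 - k); split_abs (b + 1 - k); split_abs (a - k); split_abs (b - k);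
  lra.
Qed.

Section SumOverPairs.

Variables (R : nmodType) (V : finType) (u v : V).
Hypothesis neq_uv : u != v.

Let P := [pred x : V | (x != u) && (x != v)].

Lemma big_split_pair (F : V -> R) :
  \sum_x F x = F u + F v + \sum_(x in P) F x.
Proof.
by rewrite (bigD1 u) //= (bigD1 v) 1?eq_sym //= addrA.
Qed.

Lemma big_split_pair2 (h : V -> V -> R) :
  \sum_x \sum_y h x y =
    h u u + h u v + h v u + h v v
    + \sum_(y in P) (h u y + h v y) + \sum_(x in P) (h x u + h x v)
    + \sum_(x in P) \sum_(y in P) h x y.
Proof.
under eq_bigr do rewrite big_split_pair.
rewrite big_split_pair !big_split /= addrA; congr (_ + _ + _).
by rewrite -[in RHS](addrA (h u u + h u v)) [in RHS]addrACA.
Qed.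

End SumOverPairs.

Lemma sum_dist_transfer_lt (R : realDomainType) (V : finType) (f g : V -> R) u v :
  u != v -> f v + 2 <= f u -> g u = f u - 1 -> g v = f v + 1 ->
  (forall x, x != u -> x != v -> g x = f x) ->
  \sum_x \sum_y `|g x - g y| < \sum_x \sum_y `|f x - f y|.
Proof.
move=> uv fuv gu gv gx.
rewrite !(big_split_pair2 uv (fun x y => `|_ x - _ y|)) !subrr normr0 /=.
have uvE : `|g u - g v| = `|f u - f v| - 2.
  by rewrite gu gv !ger0_norm; lra.
have vuE : `|g v - g u| = `|f v - f u| - 2.
  by rewrite distrC uvE distrC.
have restE : \sum_(x | (x != u) && (x != v)) \sum_(y | (y != u) && (y != v))
    `|g x - g y| =
  \sum_(x | (x != u) && (x != v)) \sum_(y | (y != u) && (y != v)) `|f x - f y|.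
  apply: eq_bigr => x /andP[xu xv]; apply: eq_bigr => y /andP[yu yv].
  by rewrite !gx.
have rowsLe : \sum_(y | (y != u) && (y != v)) (`|g u - g y| + `|g v - g y|)
    <= \sum_(y | (y != u) && (y != v)) (`|f u - f y| + `|f v - f y|).
  apply: ler_sum => y /andP[yu yv].
  by rewrite gu gv gx //; apply: dist_transfer_le.
have colsLe : \sum_(x | (x != u) && (x != v)) (`|g x - g u| + `|g x - g v|)
    <= \sum_(x | (x != u) && (x != v)) (`|f x - f u| + `|f x - f v|).
  apply: ler_sum => x /andP[xu xv].
  by rewrite gu gv gx // !(distrC (f x)); apply: dist_transfer_le.
rewrite uvE vuE restE; lra.
Qed.

Section BranchTransformDegrees.

Variables (V : finType) (e : rel V) (w u v : V).
Hypotheses (sym_e : symmetric e) (e_wu : e w u) (not_e_wv : ~~ e w v).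
Hypotheses (neq_wu : w != u) (neq_wv : w != v) (neq_uv : u != v).

Let e' := branch_transform e w u v.

Lemma deg_branch_transform_src : deg e u = (deg e' u).+1.
Proof.
rewrite /deg (cardsD1 w [set y | e u y]) inE sym_e e_wu; congr _.+1.
apply: eq_card => y.
rewrite !inE /e' /branch_transform /= eqxx (negbTE neq_uv) (eq_sym u w) (negbTE neq_wu) /=.
by rewrite andbC !orbF.
Qed.

Lemma deg_branch_transform_dst : deg e' v = (deg e v).+1.
Proof.
rewrite /deg; have -> : [set y | e' v y] = w |: [set y | e v y].
  apply/setP => y.
  rewrite !inE /e' /branch_transform /= eqxx (eq_sym v w) (negbTE neq_wv) (eq_sym v u) (negbTE neq_uv).
  by rewrite /= andbT orbF orbC.
by rewrite cardsU1 inE sym_e not_e_wv.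
Qed.

Lemma deg_branch_transform_other x : x != u -> x != v -> deg e' x = deg e x.
Proof.
rewrite /deg => xu xv; have [->|xw] := eqVneq x w.
  have -> : [set y | e' w y] = v |: ([set y | e w y] :\ u).
    apply/setP => y; rewrite !inE /e' /branch_transform /= eqxx (negbTE neq_wu) (negbTE neq_wv) /=.
    by rewrite !orbF orbC andbC.
  rewrite cardsU1 [in RHS](cardsD1 u) !inE e_wu (negbTE not_e_wv).
  by rewrite andbF.
apply: eq_card => y.
by rewrite !inE /e' /branch_transform /= (negbTE xu) (negbTE xv) (negbTE xw) /= !orbF andbT.
Qed.

End BranchTransformDegrees.

Theorem lemma2 (V : finType) (e : rel V) (T : {set V}) (u v w : V) :
  simple_graph e ->
  (2 <= #|[set x | pendent e x]|)%N ->
  (3 <= deg e u)%N ->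
  hanging_tree e T w u ->
  pendent e v -> v \notin T ->
  (irr_t (branch_transform e w u v) < irr_t e)%R.
Proof.
move=> [_ sym_e] _ deg_u [_ wT uNT e_wu cut] /eqP deg_v vNT.
have neq_uv : u != v by apply/eqP=> uv; move: deg_u; rewrite uv deg_v.
have neq_wu : w != u by apply: contraNneq uNT => <-.
have neq_wv : w != v by apply: contraNneq vNT => <-.
have not_e_wv : ~~ e w v.
  by apply/negP=> e_wv; have [_ vu] := cut w v wT vNT e_wv; rewrite vu eqxx in neq_uv.
rewrite /irr_t ltr_pM2l ?invr_gt0 ?ltr0n //.
apply: (@sum_dist_transfer_lt _ _ (fun x => (deg e x)%:R) _ u v neq_uv) => /=.
- by rewrite deg_v -natrD ler_nat.
- by rewrite (deg_branch_transform_src (v := v) sym_e e_wu) // -addn1 natrD addrK.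
- by rewrite (deg_branch_transform_dst sym_e not_e_wv) // -addn1 natrD.
- by move=> x xu xv; rewrite (deg_branch_transform_other e_wu not_e_wv).
Qed.
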